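(* For all non-negative integers $k$ and $n$, every weak embedding of $L_2(k)$ into $L_2(n)$ is a strong embedding.
   Context: $B_m$ denotes the Boolean lattice of all subsets of $\{1,\dots,m\}$ ordered by inclusion. $L_2(m)$ denotes the subposet of $B_m$ induced by the union of levels $\lfloor (m-1)/2\rfloor$ and $\lfloor (m+1)/2\rfloor$ (the $j$-th level being the $j$-element subsets). An injective map $f$ from a poset $P$ to a poset $Q$ is a weak embedding if $p\le q$ implies $f(p)\le f(q)$, and a strong embedding if $p\le q\iff f(p)\le f(q)$. *)

From mathcomp Require Import all_boot.
Set Implicit Arguments. Unset Strict Implicit. Unset Printing Implicit Defensive.

(* For m = 0 the lower level index is floor(-1/2) = -1 (empty level); with
   truncated nat arithmetic (m.-1)./2 = 0, which gives the same union. *)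
Definition L2_low (m : nat) : nat := (m.-1)./2.
Definition L2_high (m : nat) : nat := (m.+1)./2.

Definition in_L2 (m : nat) (A : {set 'I_m}) : bool :=
  (#|A| == L2_low m) || (#|A| == L2_high m).

Definition L2 (m : nat) := {A : {set 'I_m} | in_L2 A}.

Definition L2_le (m : nat) (p q : L2 m) : bool := val p \subset val q.

Definition weak_embedding (k n : nat) (f : L2 k -> L2 n) : Prop :=
  injective f /\ forall p q : L2 k, L2_le p q -> L2_le (f p) (f q).

Definition strong_embedding (k n : nat) (f : L2 k -> L2 n) : Prop :=
  injective f /\ forall p q : L2 k, L2_le p q <-> L2_le (f p) (f q).

From mathcomp Require Import all_boot zify.
Set Implicit Arguments. Unset Strict Implicit. Unset Printing Implicit Defensive.

(* A weak embedding f of L_2(k) into L_2(n) preserves levels, since every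
   lower set lies strictly below some upper set.  Every covering pair L < U
   then induces a map phi_{L,U} from ground set to ground set: x in L goes to
   the unique element of f(U) minus f(U - x), and x not in L to the unique
   element of f(L + x) minus f(L).  Counting inside the two middle levels of
   B_n shows that phi_{L,U} does not depend on the covering pair, and it maps
   L into f(L) and the complement of U into the complement of f(U).  Hence
   f(A) <= f(B) with A lower and B upper forces A <= B. *)

Section CoveringSets.
Variable T : finType.
Implicit Types A B C X Y : {set T}.

Lemma eq_subset_card A B : A \subset B -> #|B| <= #|A| -> A = B.
Proof. by move=> sAB leBA; apply/eqP; rewrite eqEcard sAB leBA. Qed.

Lemma cardsD1S A x c : x \in A -> #|A| = c.+1 -> #|A :\ x| = c.
Proof. by move=> Ax; rewrite (cardsD1 x) Ax add1n => -[]. Qed.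

Definition cover_diff X Y : option T := [pick z in X :\: Y].

Lemma cover_diffP X Y : Y \subset X -> #|X| = #|Y|.+1 ->
  exists z, [/\ cover_diff X Y = Some z, z \notin Y & X = z |: Y].
Proof.
move=> sYX cardX.
have /cards1P[z XYz] : #|X :\: Y| == 1.
  by rewrite cardsD (setIidPr sYX) cardX subSnn.
have /setDP[Xz Yz] : z \in X :\: Y by rewrite XYz set11.
exists z; split => //.
  rewrite /cover_diff XYz; case: pickP => [y /set1P -> //|/(_ z)].
  by rewrite set11.
apply/esym/eq_subset_card; first by rewrite subUset sub1set Xz sYX.
by rewrite cardsU1 Yz cardX.
Qed.

Lemma card_setI_cover A B C j : A \subset C -> B \subset C ->
  #|A| = j -> #|B| = j -> #|C| = j.+1 -> A != B -> #|A :&: B| + 1 = j.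
Proof.
move=> sAC sBC cardA cardB cardC neAB.
have leUC : #|A :|: B| <= j.+1.
  by rewrite -cardC subset_leq_card // subUset sAC sBC.
suff ltAU : j < #|A :|: B| by have := cardsUI A B; lia.
rewrite ltnNge; apply: contra neAB => leUA.
have AU : A = A :|: B by apply: eq_subset_card; rewrite ?subsetUl ?cardA.
have sBA : B \subset A by rewrite AU subsetUr.
by rewrite (eq_subset_card sBA) ?cardA ?cardB.
Qed.

End CoveringSets.

Lemma L2_low_high m : L2_low m <= L2_high m <= (L2_low m).+1.
Proof. by case: m => // m; rewrite /L2_low /L2_high /= leqnn leqnSn. Qed.

Section WeakEmbedding.
Variables (k' n : nat) (f : L2 k'.+1 -> L2 n).
Hypotheses (f_inj : injective f)
  (f_mono : forall p q : L2 k'.+1, L2_le p q -> L2_le (f p) (f q)).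

Local Notation k := k'.+1.
Local Notation l := k'./2.
Local Notation m := (L2_low n).
Implicit Types A B L U : {set 'I_k}.

(* [set0] is a junk value outside the two middle levels. *)
Definition fext A : {set 'I_n} :=
  if insub A : option (L2 k) is Some p then val (f p) else set0.

Lemma fextE (p : L2 k) : fext (val p) = val (f p).
Proof. by rewrite /fext valK. Qed.

Lemma in_L2_fext A : in_L2 A -> in_L2 (fext A).
Proof. by move=> LA; rewrite -[A]/(val (Sub A LA : L2 k)) fextE; apply: valP. Qed.

Lemma fext_mono A B : in_L2 A -> in_L2 B -> A \subset B -> fext A \subset fext B.
Proof.
move=> LA LB; rewrite -[A]/(val (Sub A LA : L2 k)) -[B]/(val (Sub B LB : L2 k)).
by rewrite !fextE; apply: f_mono.
Qed.

Lemma fext_inj A B : in_L2 A -> in_L2 B -> fext A = fext B -> A = B.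
Proof.
move=> LA LB; rewrite -[A]/(val (Sub A LA : L2 k)) -[B]/(val (Sub B LB : L2 k)).
by rewrite !fextE => /val_inj/f_inj ->.
Qed.

Lemma in_L2_low A : #|A| = l -> in_L2 A.
Proof. by move=> cardA; rewrite /in_L2 /L2_low /= cardA eqxx. Qed.

Lemma in_L2_high A : #|A| = l.+1 -> in_L2 A.
Proof. by move=> cardA; rewrite /in_L2 /L2_high /= cardA eqxx orbT. Qed.

Definition flag L U := [/\ L \subset U, #|L| = l & #|U| = l.+1].

Lemma flagU1 L y : #|L| = l -> y \notin L -> flag L (y |: L).
Proof. by move=> cardL Ly; split; rewrite ?subsetUr ?cardsU1 ?Ly ?cardL. Qed.

Lemma flagD1 U x : #|U| = l.+1 -> x \in U -> flag (U :\ x) U.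
Proof. by move=> cardU Ux; split; rewrite ?subD1set ?(cardsD1S Ux cardU). Qed.

Lemma exists_notin_low L : #|L| = l -> exists y, y \notin L.
Proof.
move=> cardL; have /card_gt0P[y] : 0 < #|~: L|.
  have := cardsC L; rewrite card_ord cardL.
  have : l <= k' by rewrite leq_half_double; lia.
  lia.
by rewrite inE; exists y.
Qed.

Lemma fext_proper L U : flag L U -> fext L \proper fext U.
Proof.
case=> sLU cardL cardU; have LL := in_L2_low cardL; have LU := in_L2_high cardU.
rewrite properEneq fext_mono // andbT.
by apply/eqP => /(fext_inj LL LU) eqLU; move: cardL; rewrite eqLU cardU; lia.
Qed.

Lemma card_fext_flag L U : flag L U -> #|fext L| = m /\ #|fext U| = m.+1.
Proof.
move=> flLU; have ltLU := proper_card (fext_proper flLU).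
case: flLU => _ /in_L2_low/in_L2_fext LL /in_L2_high/in_L2_fext LU.
have /andP[lemh lehm] := L2_low_high n.
by move: LL LU; rewrite /in_L2 => /orP[] /eqP ? /orP[] /eqP ?; lia.
Qed.

Lemma card_fext_low L : #|L| = l -> #|fext L| = m.
Proof.
move=> cardL; have [y Ly] := exists_notin_low cardL.
by case: (card_fext_flag (flagU1 cardL Ly)).
Qed.

Lemma card_fext_high U : #|U| = l.+1 -> #|fext U| = m.+1.
Proof.
move=> cardU; have /card_gt0P[x Ux] : 0 < #|U| by rewrite cardU.
by case: (card_fext_flag (flagD1 cardU Ux)).
Qed.

Definition fresh L U := cover_diff (fext U) (fext L).

Lemma freshP L U : flag L U ->
  exists z, [/\ fresh L U = Some z, z \notin fext L & fext U = z |: fext L].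
Proof.
move=> flLU; have [cardFL cardFU] := card_fext_flag flLU.
apply: cover_diffP; last by rewrite cardFL cardFU.
by case: flLU => sLU /in_L2_low LL /in_L2_high LU; apply: fext_mono.
Qed.

Lemma flagP L U : flag L U -> exists2 b, b \notin L & U = b |: L.
Proof.
case=> sLU cardL cardU.
have [|b [_ Lb ->]] := cover_diffP sLU; first by rewrite cardU cardL.
by exists b.
Qed.

Lemma flag_setD1 L U x : flag L U -> x \in U -> x \notin L -> L = U :\ x /\ U = x |: L.
Proof.
move=> flLU + Lx; have [b Lb ->] := flagP flLU.
by rewrite in_setU1 (negbTE Lx) orbF => /eqP->; rewrite setU1K.
Qed.

Definition phi L U x := if x \in L then fresh (U :\ x) U else fresh L (x |: L).

Lemma phi_in L U x : flag L U -> x \in L ->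
  exists2 z, phi L U x = Some z & z \in fext L.
Proof.
move=> flLU Lx; have [sLU cardL cardU] := flLU; have Ux := subsetP sLU x Lx.
have cardUx := cardsD1S Ux cardU.
have [z [fz zUx FU]] := freshP (flagD1 cardU Ux).
exists z; first by rewrite /phi Lx.
apply: contraT => zL.
have sFL : fext L \subset fext (U :\ x).
  by rewrite -(setU1K zUx) -FU subsetD1 zL (proper_sub (fext_proper flLU)).
have := eq_subset_card sFL; rewrite card_fext_low // card_fext_low // leqnn.
move=> /(_ isT)/(fext_inj (in_L2_low cardL) (in_L2_low cardUx)) eqL.
by move: Lx; rewrite eqL setD11.
Qed.

Lemma phi_notin L U x : flag L U -> x \notin U ->
  exists2 z, phi L U x = Some z & z \notin fext U.
Proof.
move=> flLU Ux; have [sLU cardL cardU] := flLU.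
have Lx : x \notin L by apply: contra Ux; apply: subsetP.
have flLx := flagU1 cardL Lx; have [_ _ cardLx] := flLx.
have [z [fz _ FLx]] := freshP flLx.
exists z; first by rewrite /phi (negbTE Lx).
apply: contra Ux => Uz.
have sFLx : fext (x |: L) \subset fext U.
  by rewrite FLx subUset sub1set Uz (proper_sub (fext_proper flLU)).
have := eq_subset_card sFLx; rewrite card_fext_high // card_fext_high // leqnn.
move=> /(_ isT)/(fext_inj (in_L2_high cardLx) (in_L2_high cardU)) <-.
by rewrite setU11.
Qed.

Lemma fext_exchange L U x w z : flag L U -> x \in L ->
  fresh L U = Some w -> phi L U x = Some z ->
  w |: (fext L :\ z) \subset fext (U :\ x).
Proof.
move=> flLU Lx fw phiz; have [sLU _ cardU] := flLU.
have Lz : z \in fext L by have [z0] := phi_in flLU Lx; rewrite phiz => -[<-].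
have [w' [fw' Lw FU]] := freshP flLU; move: fw; rewrite fw' => -[<-].
have [z' [fz' zUx FU']] := freshP (flagD1 cardU (subsetP sLU x Lx)).
move: phiz; rewrite /phi Lx fz' => -[?]; subst z'.
rewrite -(setU1K zUx) -FU' subsetD1 in_setU1 setD11 orbF subUset sub1set.
rewrite FU setU11 (subset_trans (subD1set _ _) (subsetUr _ _)) /=.
by apply: contraTneq Lz => ->.
Qed.

Lemma phi_indep_high L U U' : flag L U -> flag L U' -> phi L U =1 phi L U'.
Proof.
move=> flU flU' x; case: (boolP (x \in L)) => Lx; last by rewrite /phi (negbTE Lx).
have [z phiz Lz] := phi_in flU Lx; have [z' phiz' _] := phi_in flU' Lx.
rewrite phiz phiz'; case: (eqVneq z z') => [-> // | nezz']; exfalso.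
have [[sLU cardL cardU] [sLU' _ cardU']] := (flU, flU').
have [w [fw Lw FU]] := freshP flU; have [w' [fw' Lw' FU']] := freshP flU'.
have neUU' : U != U' by apply: contra_neq nezz' => eqU; move: phiz; rewrite eqU phiz' => -[].
have newU : w != w'.
  apply: contra_neq neUU' => eqw.
  by apply: fext_inj (in_L2_high cardU) (in_L2_high cardU') _; rewrite FU FU' eqw.
have [b Lb defU] := flagP flU; have [b' Lb' defU'] := flagP flU'.
have U'b : b \notin U'.
  rewrite defU' in_setU1 negb_or Lb andbT.
  by apply: contra_neq neUU' => eqb; rewrite defU defU' eqb.
have cardU'x := cardsD1S (subsetP sLU' x Lx) cardU'.
have cardUx := cardsD1S (subsetP sLU x Lx) cardU.
pose W := b |: (U' :\ x).
have cardW : #|W| = l.+1 by rewrite cardsU1 in_setD1 (negbTE U'b) andbF cardU'x.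
have sUW : fext (U :\ x) \subset fext W.
  apply: fext_mono; [exact: in_L2_low | exact: in_L2_high |].
  apply/subsetP => y; rewrite defU !inE.
  by case/andP=> -> /orP[-> // | /(subsetP sLU') ->]; rewrite orbT.
have sU'W : fext (U' :\ x) \subset fext W.
  by apply: fext_mono; [exact: in_L2_low | exact: in_L2_high | exact: subsetUr].
have exU := fext_exchange flU Lx fw phiz.
have exU' := fext_exchange flU' Lx fw' phiz'.
(* Two m-subsets of the (m+1)-set fext W cannot cover the m+2 elements below. *)
have sFW : w |: (w' |: fext L) \subset fext W.
  apply/subsetP => y; rewrite !in_setU1 => /or3P[/eqP-> | /eqP-> | Ly].
  - by apply/(subsetP sUW)/(subsetP exU); rewrite setU11.
  - by apply/(subsetP sU'W)/(subsetP exU'); rewrite setU11.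
  - case: (eqVneq y z) => [-> | nyz].
      by apply/(subsetP sU'W)/(subsetP exU'); rewrite in_setU1 in_setD1 Lz nezz' orbT.
    by apply/(subsetP sUW)/(subsetP exU); rewrite in_setU1 in_setD1 Ly nyz orbT.
have := subset_leq_card sFW.
rewrite !cardsU1 in_setU1 negb_or newU Lw Lw' card_fext_low // card_fext_high //.
by rewrite /= ltnn.
Qed.

Lemma fresh_outside_indep L L' U x : flag L U -> flag L' U -> x \notin U ->
  fresh L (x |: L) = fresh L' (x |: L').
Proof.
move=> flL flL' Ux; have [[sLU cardL cardU] [sL'U cardL' _]] := (flL, flL').
have Lx : x \notin L by apply: contra Ux; apply: subsetP.
have L'x : x \notin L' by apply: contra Ux; apply: subsetP.
have [flLx flL'x] := (flagU1 cardL Lx, flagU1 cardL' L'x).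
have [[_ _ cardLx] [_ _ cardL'x]] := (flLx, flL'x).
have [z [fz _ FLx]] := freshP flLx; have [z' [fz' _ FL'x]] := freshP flL'x.
have Uz : z \notin fext U.
  by have [z1] := phi_notin flL Ux; rewrite /phi (negbTE Lx) fz => -[<-].
have Uz' : z' \notin fext U.
  by have [z1] := phi_notin flL' Ux; rewrite /phi (negbTE L'x) fz' => -[<-].
rewrite fz fz'; case: (eqVneq z z') => [-> // | nezz']; exfalso.
have neLL' : L != L' by apply: contra_neq nezz' => eqL; move: fz; rewrite eqL fz' => -[].
have [sFLU sFL'U] := (proper_sub (fext_proper flL), proper_sub (fext_proper flL')).
pose N := x |: (L :&: L').
have cardN : #|N| = l.
  by rewrite cardsU1 in_setI (negbTE Lx) /= add1n
    -(card_setI_cover sLU sL'U cardL cardL' cardU neLL') addn1.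
(* The m-set fext N would fit into fext L :&: fext L', which has m - 1 elements. *)
have sFN : fext N \subset fext L :&: fext L'.
  have sNL : fext N \subset fext (x |: L).
    apply: fext_mono; [exact: in_L2_low | exact: in_L2_high cardLx |].
    exact: setUS (subsetIl L L').
  have sNL' : fext N \subset fext (x |: L').
    apply: fext_mono; [exact: in_L2_low | exact: in_L2_high cardL'x |].
    exact: setUS (subsetIr L L').
  apply/subsetP => y Ny; move: (subsetP sNL y Ny) (subsetP sNL' y Ny).
  rewrite FLx FL'x !in_setU1 inE => /orP[/eqP yz | FLy] /orP[/eqP yz' | FL'y].
  - by move: nezz'; rewrite -yz -yz' eqxx.
  - by move: Uz; rewrite -yz (subsetP sFL'U y FL'y).
  - by move: Uz'; rewrite -yz' (subsetP sFLU y FLy).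
  - by rewrite FLy FL'y.
have neFL : fext L != fext L'.
  by apply: contra_neq neLL'; apply: fext_inj; apply: in_L2_low.
have := card_setI_cover sFLU sFL'U (card_fext_low cardL) (card_fext_low cardL')
  (card_fext_high cardU) neFL.
have := subset_leq_card sFN; rewrite card_fext_low // => leI eqI.
by move: leI; rewrite -eqI addn1 ltnn.
Qed.

Lemma phi_indep_low L L' U : flag L U -> flag L' U -> phi L U =1 phi L' U.
Proof.
move=> flL flL' x; have [[sLU _ _] [sL'U _ _]] := (flL, flL').
case: (boolP (x \in U)) => Ux; last first.
  have [Lx L'x] := (contra (subsetP sLU x) Ux, contra (subsetP sL'U x) Ux).
  by rewrite /phi (negbTE Lx) (negbTE L'x) (fresh_outside_indep flL flL' Ux).
rewrite /phi; case: (boolP (x \in L)) => Lx; case: (boolP (x \in L')) => L'x //.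
- by have [eL' eU] := flag_setD1 flL' Ux L'x; rewrite -eU -eL'.
- by have [eL eU] := flag_setD1 flL Ux Lx; rewrite -eU -eL.
- by rewrite (proj1 (flag_setD1 flL Ux Lx)) (proj1 (flag_setD1 flL' Ux L'x)).
Qed.

Lemma phi_indep L U L' U' : flag L U -> flag L' U' -> phi L U =1 phi L' U'.
Proof.
move=> + flLU'; have [[_ cardL' _] [j]] := (flLU', ubnP #|L :\: L'|).
elim: j L U => // j IHj L U ltLj flLU; have [_ cardL _] := flLU.
case: (set_0Vmem (L :\: L')) => [/eqP | [a /setDP[La L'a]]].
  rewrite setD_eq0 => sLL'; have eqL : L = L' by rewrite (eq_subset_card sLL') ?cardL ?cardL'.
  by rewrite eqL in flLU *; apply: phi_indep_high.
have /card_gt0P[b /setDP[L'b Lb]] : 0 < #|L' :\: L|.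
  rewrite cardsD setIC cardL' -cardL -cardsD; apply/card_gt0P.
  by exists a; rewrite inE La L'a.
have flLU1 := flagU1 cardL Lb; have [_ _ cardU1] := flLU1.
have flL1U1 := flagD1 cardU1 (setU1r b La).
have ltL1j : #|(b |: L) :\ a :\: L'| < j.
  have sL1 : (b |: L) :\ a :\: L' \subset (L :\: L') :\ a.
    apply/subsetP => y; rewrite !inE => /andP[L'y /andP[-> /orP[/eqP yb | ->]]].
      by move: L'y; rewrite yb L'b.
    by rewrite L'y.
  apply: leq_ltn_trans (subset_leq_card sL1) _.
  by move: ltLj; rewrite (cardsD1 a) inE La L'a.
move=> x; rewrite (phi_indep_high flLU flLU1 x) -(phi_indep_low flL1U1 flLU1 x).
exact: IHj.
Qed.

Lemma fext_subset_low_high A B : #|A| = l -> #|B| = l.+1 ->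
  fext A \subset fext B -> A \subset B.
Proof.
move=> cardA cardB sFAB; apply/subsetP => x Ax; apply: contraT => Bx.
have [y Ay] := exists_notin_low cardA.
have /card_gt0P[v Bv] : 0 < #|B| by rewrite cardB.
have [flA flB] := (flagU1 cardA Ay, flagD1 cardB Bv).
have [z phiz FAz] := phi_in flA Ax; have [z' phiz' FBz'] := phi_notin flB Bx.
move: phiz; rewrite (phi_indep flA flB x) phiz' => -[eqz].
by move: FBz'; rewrite eqz (subsetP sFAB).
Qed.

Lemma L2_le_reflect (p q : L2 k) : L2_le (f p) (f q) -> L2_le p q.
Proof.
rewrite /L2_le -!fextE; case: p q => [A LA] [B LB] /= sFAB.
have eq_same_card : #|fext B| <= #|fext A| -> A \subset B.
  by move/(eq_subset_card sFAB)/(fext_inj LA LB) ->.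
move: LA LB; rewrite /in_L2 /L2_low /L2_high /= => /orP[] /eqP cardA /orP[] /eqP cardB.
- by rewrite eq_same_card // !card_fext_low.
- exact: fext_subset_low_high.
- by have := subset_leq_card sFAB; rewrite card_fext_high // card_fext_low // ltnn.
- by rewrite eq_same_card // !card_fext_high.
Qed.

End WeakEmbedding.

Theorem mainTheorem9 (k n : nat) (f : L2 k -> L2 n) :
  weak_embedding f -> strong_embedding f.
Proof.
case=> f_inj f_mono; split => // p q; split; first exact: f_mono.
case: k f f_inj f_mono p q => [|k'] f f_inj f_mono p q.
  by move=> _; apply/subsetP => -[].
exact: L2_le_reflect.
Qed.
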